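(* Let $X$ be a real vector space, $n\ge 2$, and let $(\cdot,\cdot\mid\cdot,\ldots,\cdot)$ be a weak $n$-inner product on $X$, with $\|x\mid x_n,\ldots,x_2\|:=\sqrt{(x,x\mid x_n,\ldots,x_2)}$. Fix $x_2,\ldots,x_n\in X$, let $Y=\mathrm{span}\{x_2,\ldots,x_n\}$ and let $X/Y=\{\hat x: x\in X\}$ with $\hat x=\{u\in X: u-x\in Y\}$. Then the function $\varphi:X/Y\to[0,\infty)$, $\varphi(\hat x):=\|x\mid x_n,\ldots,x_2\|$, is well defined and is a seminorm on $X/Y$. Moreover, if $x_2,\ldots,x_n$ are linearly independent, then $\varphi$ is a norm on $X/Y$.
   Context: A weak $n$-inner product ($n\ge2$) on a real vector space $X$ is a function $(\cdot,\cdot\mid\cdot,\ldots,\cdot):X^{n+1}\to\mathbb{R}$, written $(x,y\mid x_n,\ldots,x_2)$, such that for all $x,x',y,x_2,\ldots,x_n\in X$ and $\alpha\in\mathbb{R}$: (P1) $(x,x\mid x_n,\ldots,x_2)\ge 0$, with equality if and only if $x,x_2,\ldots,x_n$ are linearly dependent; (P2) $(x,x\mid x_n,\ldots,x_2)=(x_n,x_n\mid x,x_{n-1},\ldots,x_2)$; (P3) $(x,y\mid x_n,\ldots,x_2)=(y,x\mid x_n,\ldots,x_2)$; (P4) $(\alpha x,y\mid x_n,\ldots,x_2)=\alpha(x,y\mid x_n,\ldots,x_2)$; (P5) $(x+x',y\mid x_n,\ldots,x_2)=(x,y\mid x_n,\ldots,x_2)+(x',y\mid x_n,\ldots,x_2)$.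 *)

From HB Require Import structures.
From mathcomp Require Import all_boot all_order all_algebra.
From mathcomp Require Import reals.
Set Implicit Arguments. Unset Strict Implicit. Unset Printing Implicit Defensive.
Import Order.TTheory GRing.Theory Num.Theory.
Local Open Scope ring_scope.

Section WeakNIP.
Variables (R : realType) (X : lmodType R).

Definition lin_dep (s : seq X) : Prop :=
  exists c : 'I_(size s) -> R,
    (exists i, c i != 0) /\ \sum_(i < size s) c i *: s`_i = 0.

Definition in_span (s : seq X) (u : X) : Prop :=
  exists c : 'I_(size s) -> R, u = \sum_(i < size s) c i *: s`_i.

(* the coset  x^ = { u | u - x \in span s }, an element of X / span s *)
Definition coset (s : seq X) (x : X) : X -> Prop :=
  fun u => in_span s (u - x).

(* ip x y [:: x_n; x_(n-1); ...; x_2] stands for (x, y | x_n, ..., x_2).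
   Only lists of length n-1 are relevant. *)
Definition weak_n_inner_product (n : nat) (ip : X -> X -> seq X -> R) : Prop :=
  forall zs : seq X, size zs = n.-1 ->
  [/\ forall x, 0 <= ip x x zs /\ (ip x x zs = 0 <-> lin_dep (x :: zs)),
      forall x, ip x x zs = ip (head 0 zs) (head 0 zs) (x :: behead zs),
      forall x y, ip x y zs = ip y x zs,
      forall (a : R) x y, ip (a *: x) y zs = a * ip x y zs
    & forall x x' y, ip (x + x') y zs = ip x y zs + ip x' y zs].

Definition nip_norm (ip : X -> X -> seq X -> R) (x : X) (zs : seq X) : R :=
  Num.sqrt (ip x x zs).

End WeakNIP.

(* Fixing zs = [:: x_n; ...; x_2], the map (x, y) |-> (x, y | zs) is a
   symmetric positive semidefinite bilinear form on X.  Its square-rooted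
   quadratic form is therefore a seminorm (Cauchy-Schwarz gives the triangle
   inequality), and it is constant on cosets of its null vectors.  By (P1)
   every vector of span zs is null, so the seminorm factors through X / span zs;
   conversely a null vector x makes x :: zs dependent, hence x lies in span zs
   as soon as zs is independent, which is definiteness. *)
From HB Require Import structures.
From mathcomp Require Import all_boot all_order all_algebra.
From mathcomp Require Import boolp reals.
From mathcomp Require Import ring lra.
Set Implicit Arguments.
Import Order.TTheory GRing.Theory Num.Theory.
Local Open Scope ring_scope.

Section SemidefiniteForm.
Context {R : rcfType} {X : lmodType R} {f : X -> X -> R}.
Hypotheses (formC : forall x y, f x y = f y x)
           (formZl : forall a x y, f (a *: x) y = a * f x y)
           (formDl : forall x x' y, f (x + x') y = f x y + f x' y)
           (form_ge0 : forall x, 0 <= f x x).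

Lemma formZr a x y : f x (a *: y) = a * f x y.
Proof. by rewrite formC formZl formC. Qed.

Lemma formDr x y y' : f x (y + y') = f x y + f x y'.
Proof. by rewrite formC formDl !(formC _ x). Qed.

Lemma formDZ s t x y : f (s *: x + t *: y) (s *: x + t *: y) =
  s ^+ 2 * f x x + 2 * s * t * f x y + t ^+ 2 * f y y.
Proof. rewrite !formDl !formDr !formZl !formZr (formC y x); ring. Qed.

Lemma formDD x y : f (x + y) (x + y) = f x x + 2 * f x y + f y y.
Proof. by have := formDZ 1 1 x y; rewrite !scale1r => ->; ring. Qed.

Lemma form_cauchy_schwarz x y : f x y ^+ 2 <= f x x * f y y.
Proof.
have := form_ge0 x; have := form_ge0 y.
set a := f x x; set b := f x y; set c := f y y => c_ge0 a_ge0.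
have [c_gt0 | c_le0] := ltrP 0 c.
  have := form_ge0 (c *: x + (- b) *: y); rewrite formDZ -/a -/b -/c => q_ge0.
  have : 0 <= c * (a * c - b ^+ 2) by nra.
  by rewrite pmulr_rge0 // subr_ge0.
have c0 : c = 0 by lra.
(* with c = 0 the form is affine in t; the choice below makes it -(a + 2) b^2 *)
have := form_ge0 (b *: x + (- (a + 1)) *: y); rewrite formDZ -/a -/b -/c c0.
nra.
Qed.

Lemma form_le_sqrt x y : f x y <= Num.sqrt (f x x) * Num.sqrt (f y y).
Proof.
rewrite -sqrtrM //; apply: le_trans (ler_norm _) _.
by rewrite -sqrtr_sqr; apply/ler_wsqrtr/form_cauchy_schwarz.
Qed.

Lemma sqrt_formZ a x : Num.sqrt (f (a *: x) (a *: x)) = `|a| * Num.sqrt (f x x).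
Proof. by rewrite formZl formZr mulrA -expr2 sqrtrM ?sqr_ge0 // sqrtr_sqr. Qed.

Lemma sqrt_formD_le x y :
  Num.sqrt (f (x + y) (x + y)) <= Num.sqrt (f x x) + Num.sqrt (f y y).
Proof.
have := form_le_sqrt x y; have := sqr_sqrtr (form_ge0 x); have := sqr_sqrtr (form_ge0 y).
have := sqrtr_ge0 (f x x); have := sqrtr_ge0 (f y y).
set sa := Num.sqrt (f x x); set sc := Num.sqrt (f y y) => sc_ge0 sa_ge0 sqc sqa b_le.
rewrite -(ger0_norm (addr_ge0 sa_ge0 sc_ge0)) -sqrtr_sqr.
by apply: ler_wsqrtr; rewrite formDD sqrrD sqa sqc; lra.
Qed.

Lemma form_null_orthogonal x y : f y y = 0 -> f x y = 0.
Proof.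
move=> y0; apply/eqP; rewrite -sqrf_eq0 eq_le sqr_ge0 andbT.
by have := form_cauchy_schwarz x y; rewrite y0 mulr0.
Qed.

Lemma formD_null x y : f y y = 0 -> f (x + y) (x + y) = f x x.
Proof. by move=> y0; rewrite formDD (form_null_orthogonal x y0) y0; ring. Qed.

End SemidefiniteForm.

Section SpanCoset.
Variables (R : realType) (X : lmodType R) (s : seq X).

Lemma in_span0 : in_span s 0.
Proof. by exists (fun=> 0); rewrite big1 // => i _; rewrite scale0r. Qed.

Lemma in_spanD u v : in_span s u -> in_span s v -> in_span s (u + v).
Proof.
move=> [c ->] [d ->]; exists (fun i => c i + d i).
by rewrite -big_split; apply: eq_bigr => i _; rewrite scalerDl.
Qed.

Lemma in_spanZ a u : in_span s u -> in_span s (a *: u).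
Proof.
move=> [c ->]; exists (fun i => a * c i).
by rewrite scaler_sumr; apply: eq_bigr => i _; rewrite scalerA.
Qed.

Lemma in_spanN u : in_span s u -> in_span s (- u).
Proof. by rewrite -scaleN1r; apply: in_spanZ. Qed.

Lemma lin_dep_cons_of_in_span y : in_span s y -> lin_dep (y :: s).
Proof.
move=> [d yE].
pose c i := if unlift ord0 i is Some j then d j else -1 : R.
exists c; split; first by exists ord0; rewrite /c unlift_none oppr_eq0 oner_eq0.
rewrite big_ord_recl /c unlift_none scaleN1r /=.
under eq_bigr => i _ do rewrite liftK.
by rewrite -yE addNr.
Qed.

Lemma in_span_of_lin_dep_cons x : ~ lin_dep s -> lin_dep (x :: s) -> in_span s x.
Proof.
move=> s_indep [c [[i ci] /=]]; rewrite big_ord_recl /= => c_rel.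
have c0 : c ord0 != 0.
  apply/eqP => c0; apply: s_indep.
  exists (fun j => c (lift ord0 j)); split.
    by case: (unliftP ord0 i) ci => [j -> | ->]; [exists j | rewrite c0 eqxx].
  by move: c_rel; rewrite c0 scale0r add0r.
set v := \sum_(j < size s) _ in c_rel.
have -> : x = (- (c ord0)^-1) *: v.
  apply: (scalerI c0); rewrite scalerA mulrN mulfV // scaleN1r.
  by apply/eqP; rewrite -addr_eq0 c_rel.
by apply: in_spanZ; exists (fun j => c (lift ord0 j)).
Qed.

Lemma in_span_of_coset_eq x u : coset s x = coset s u -> in_span s (u - x).
Proof. by move=> xu; rewrite -/(coset s x u) xu /coset subrr; apply: in_span0. Qed.

Lemma coset_eq0_of_in_span x : in_span s x -> coset s x = coset s 0.
Proof.
move=> x_in; apply: funext => u; apply: propext.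
rewrite /coset subr0; split => [ux_in | u_in].
  by rewrite -(subrK x u); apply: in_spanD.
by apply: in_spanD; last by apply: in_spanN.
Qed.

End SpanCoset.

Theorem theorem2p3 (R : realType) (X : lmodType R) (n : nat)
    (ip : X -> X -> seq X -> R) (zs : seq X) :
  (2 <= n)%N -> weak_n_inner_product n ip -> size zs = n.-1 ->
  [/\ (* phi is well defined on X/Y *)
      forall x u : X, coset zs x = coset zs u -> nip_norm ip x zs = nip_norm ip u zs,
      (* values in [0, oo) *)
      forall x : X, 0 <= nip_norm ip x zs,
      (* absolute homogeneity: phi (a x^) = |a| phi (x^), with a x^ = (a x)^ *)
      forall (a : R) (x : X), nip_norm ip (a *: x) zs = `|a| * nip_norm ip x zs,
      (* triangle inequality: x^ + y^ = (x + y)^ *)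
      forall x y : X, nip_norm ip (x + y) zs <= nip_norm ip x zs + nip_norm ip y zs
    & (* definiteness when x_2, ..., x_n are linearly independent *)
      ~ lin_dep zs -> forall x : X, nip_norm ip x zs = 0 -> coset zs x = coset zs 0].
Proof.
move=> _ /(_ zs) ip_wnip /ip_wnip[P1 _ P3 P4 P5] {ip_wnip}.
pose f x y := ip x y zs.
have f_ge0 x : 0 <= f x x := (P1 x).1.
have null_span y : in_span zs y -> f y y = 0.
  by move=> /lin_dep_cons_of_in_span /(P1 y).2.
rewrite /nip_norm; split.
- move=> x u /in_span_of_coset_eq /null_span u_x_null.
  by rewrite -(subrK x u) addrC (formD_null P3 P4 P5 f_ge0 x (u - x) u_x_null).
- by move=> x; apply: sqrtr_ge0.
- exact: (sqrt_formZ P3 P4).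
- exact: (sqrt_formD_le P3 P4 P5 f_ge0).
- move=> zs_indep x /eqP; rewrite sqrtr_eq0 => x_le0.
  have x_null : f x x = 0 by apply/eqP; rewrite eq_le x_le0 f_ge0.
  exact/coset_eq0_of_in_span/(in_span_of_lin_dep_cons zs_indep)/(P1 x).2.
Qed.
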